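(* Let $\succ$ be a binary relation on $\mathcal{F}$ satisfying Axioms A1–A7 below. Then for all $f\in\mathcal{F}$ and $x,y,z\in X$, if $f\Join x$, $f\succ y$ and $z\succ f$, then $z\succ x$ and $x\succ y$. Axioms: (A1) $\succ$ is asymmetric and transitive, and its restriction to $X$ is non-trivial and negatively transitive. (A2) For all $f,g,h\in\mathcal{F}$, $\{\alpha\in[0,1]:\alpha f+(1-\alpha)g\succ h\}$ and $\{\alpha\in[0,1]:h\succ\alpha f+(1-\alpha)g\}$ are open in $[0,1]$. (A3) For all $f,g\in\mathcal{F}$, $x\in X$, $\alpha\in(0,1)$: $f\succ g$ iff $\alpha f+(1-\alpha)x\succ\alpha g+(1-\alpha)x$. (A4) For all $x\in X$, $\{f:f\succ x\}$ and $\{f:x\succ f\}$ are convex. (A5) If $f(s)\succ g(s)$ for all $s\in S$ then $f\succ g$. (A6) If for all $x\in X$, $f\Join x$ implies $g\Join x$, then $f\Join g$. (A7) If $f\Join x$, $x\succ g$, $g\Join y$, $f\succ y$ (with $x,y\in X$), then $f\succ g$.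
   Context: $S$ is a set of states with algebra $\Sigma$; $X$ is a non-singleton convex subset of a real vector space; $\mathcal{F}$ is the set of simple acts $f:S\to X$ ($\Sigma$-measurable, finitely many values) with pointwise mixtures; elements of $X$ are identified with constant acts. $f\Join g$ means $f\not\succ g$ and $g\not\succ f$. *)

From HB Require Import structures.
From mathcomp Require Import all_boot all_order all_algebra.
From mathcomp Require Import boolp classical_sets cardinality reals.
Set Implicit Arguments. Unset Strict Implicit. Unset Printing Implicit Defensive.
Import Order.TTheory GRing.Theory Num.Theory.
Local Open Scope classical_set_scope.
Local Open Scope ring_scope.

Section Defs.
Context {R : realType} {V : lmodType R} {S : Type}.

Definition is_algebra (Sig : set (set S)) : Prop :=
  Sig set0 /\ (forall A, Sig A -> Sig (~` A)) /\
  (forall A B, Sig A -> Sig B -> Sig (A `|` B)).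

Definition convex_subset (X : set V) : Prop :=
  forall x y (a : R), X x -> X y -> 0 <= a <= 1 -> X (a *: x + (1 - a) *: y).

Definition cst (x : V) : S -> V := fun _ => x.

Definition mix (a : R) (f g : S -> V) : S -> V :=
  fun s => a *: f s + (1 - a) *: g s.

Definition simple_act (Sig : set (set S)) (X : set V) (f : S -> V) : Prop :=
  (forall s, X (f s)) /\ finite_set (range f) /\
  (forall v, Sig (f @^-1` [set v])).

Definition open_in_unit (P : R -> Prop) : Prop :=
  forall a, 0 <= a <= 1 -> P a ->
    exists2 e : R, 0 < e & forall b, 0 <= b <= 1 -> `|b - a| < e -> P b.

Variables (Sig : set (set S)) (X : set V) (P : (S -> V) -> (S -> V) -> Prop).
Local Notation F := (simple_act Sig X).

Definition incomp (f g : S -> V) : Prop := ~ P f g /\ ~ P g f.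

Definition A1 : Prop :=
  (forall f g, F f -> F g -> P f g -> ~ P g f) /\
  (forall f g h, F f -> F g -> F h -> P f g -> P g h -> P f h) /\
  (exists x y, X x /\ X y /\ P (cst x) (cst y)) /\
  (forall x y z, X x -> X y -> X z ->
     ~ P (cst x) (cst y) -> ~ P (cst y) (cst z) -> ~ P (cst x) (cst z)).

Definition A2 : Prop :=
  forall f g h, F f -> F g -> F h ->
    open_in_unit (fun a => P (mix a f g) h) /\
    open_in_unit (fun a => P h (mix a f g)).

Definition A3 : Prop :=
  forall f g x (a : R), F f -> F g -> X x -> 0 < a < 1 ->
    (P f g <-> P (mix a f (cst x)) (mix a g (cst x))).

Definition A4 : Prop :=
  forall x, X x ->
    (forall f g (a : R), F f -> F g -> 0 <= a <= 1 ->
       P f (cst x) -> P g (cst x) -> P (mix a f g) (cst x)) /\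
    (forall f g (a : R), F f -> F g -> 0 <= a <= 1 ->
       P (cst x) f -> P (cst x) g -> P (cst x) (mix a f g)).

Definition A5 : Prop :=
  forall f g, F f -> F g -> (forall s, P (cst (f s)) (cst (g s))) -> P f g.

Definition A6 : Prop :=
  forall f g, F f -> F g ->
    (forall x, X x -> incomp f (cst x) -> incomp g (cst x)) -> incomp f g.

Definition A7 : Prop :=
  forall f g x y, F f -> F g -> X x -> X y ->
    incomp f (cst x) -> P (cst x) g -> incomp g (cst y) -> P f (cst y) ->
    P f g.

End Defs.

From HB Require Import structures.
From mathcomp Require Import all_boot all_order all_algebra.
From mathcomp Require Import boolp classical_sets cardinality reals.
Set Implicit Arguments. Unset Strict Implicit. Unset Printing Implicit Defensive.
Local Open Scope classical_set_scope.
Local Open Scope ring_scope.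

(* If z were not above x, then x ⋈ z, since x ≻ z ≻ f would contradict
   f ⋈ x.  As z and f are comparable, A6 yields a constant w with f ⋈ w
   that is comparable to z, necessarily below it; negative transitivity
   puts w below x as well, and A7 along x ⋈ z ≻ f ⋈ w ≺ x gives x ≻ f,
   again contradicting f ⋈ x.  The second claim x ≻ y is the first one for
   the reversed relation, under which A1, A6 and A7 are invariant. *)

Section Preference.
Context {R : realType} {V : lmodType R} {S : Type}.
Variables (Sig : set (set S)) (X : set V).
Local Notation F := (simple_act Sig X).

Lemma simple_act_cst (v : V) : is_algebra Sig -> X v -> F (cst v).
Proof.
move=> [Sig0 [SigC _]] Xv; split; first by [].
split.
  apply: (@sub_finite_set _ _ [set v]); last exact: finite_set1.
  by move=> u [s _ <-].
move=> u; have [<-|vNu] := pselect (v = u).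
  have -> : cst (S:=S) v @^-1` [set v] = ~` set0.
    by apply/seteqP; split=> s //= _.
  exact: SigC.
have -> : cst (S:=S) v @^-1` [set u] = set0.
  by apply/seteqP; split=> s // /vNu.
exact: Sig0.
Qed.

Lemma incompC (P : (S -> V) -> (S -> V) -> Prop) f g :
  incomp P f g -> incomp P g f.
Proof. by case. Qed.

Section Reversal.
Variable P : (S -> V) -> (S -> V) -> Prop.
Local Notation Pr := (fun f g => P g f).

Lemma A1_rev : A1 Sig X P -> A1 Sig X Pr.
Proof.
move=> [asym [trans [[x [y [Xx [Xy xy]]]] negtrans]]]; split.
  by move=> f g Ff Fg; apply: asym.
split; first by move=> f g h Ff Fg Fh fg gh; apply: trans gh fg.
split; first by exists y, x.
by move=> x' y' z' Xx' Xy' Xz' nyx nzy; apply: negtrans nzy nyx.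
Qed.

Lemma A6_rev : A6 Sig X P -> A6 Sig X Pr.
Proof.
move=> a6 f g Ff Fg fg; suff [] : incomp P f g by split.
apply: a6 => // x Xx fx.
exact: incompC (fg x Xx (incompC fx) : incomp P (cst x) g).
Qed.

Lemma A7_rev : A7 Sig X P -> A7 Sig X Pr.
Proof.
move=> a7 f g x y Ff Fg Xx Xy [nxf nfx] gx [nyg ngy] yf.
exact: a7 Fg Ff Xy Xx (conj ngy nyg) yf (conj nfx nxf) gx.
Qed.

End Reversal.

Section AboveIncomparable.
Variable P : (S -> V) -> (S -> V) -> Prop.
Hypotheses (alg : is_algebra Sig) (a1 : A1 Sig X P).
Hypotheses (a6 : A6 Sig X P) (a7 : A7 Sig X P).

Lemma not_incomp_witness f g : F f -> F g -> ~ incomp P f g ->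
  exists w, [/\ X w, incomp P f (cst w) & ~ incomp P g (cst w)].
Proof.
move=> Ff Fg nfg; apply: contrapT => nw; apply/nfg/a6 => // w Xw fw.
by apply: contrapT => ngw; apply: nw; exists w.
Qed.

Lemma above_incomp_cst f x z : F f -> X x -> X z ->
  incomp P f (cst x) -> P (cst z) f -> P (cst z) (cst x).
Proof.
have [_ [trans [_ negtrans]]] := a1.
move=> Ff Xx Xz [fx xf] zf; apply: contrapT => nzx.
have [Fx Fz] := (simple_act_cst alg Xx, simple_act_cst alg Xz).
have nxz : ~ P (cst x) (cst z) by move=> xz; apply/xf/(trans _ _ _ Fx Fz Ff).
have [w [Xw [fw wf] nzw]] := not_incomp_witness Ff Fz (fun fz => fz.2 zf).
have Fw := simple_act_cst alg Xw.
have zw : P (cst z) (cst w).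
  apply: contrapT => nzw'; apply: nzw; split=> // wz.
  by apply/wf/(trans _ _ _ Fw Fz Ff).
have xw : P (cst x) (cst w).
  by apply: contrapT => nxw; apply: (negtrans z x w).
exact: xf (a7 Fx Ff Xz Xw (conj nxz nzx) zf (conj fw wf) xw).
Qed.

End AboveIncomparable.
End Preference.

Theorem lemma1 (R : realType) (V : lmodType R) (S : Type)
  (Sig : set (set S)) (X : set V) (P : (S -> V) -> (S -> V) -> Prop) :
  is_algebra Sig ->
  convex_subset X ->
  (exists x y, X x /\ X y /\ x <> y) ->
  A1 Sig X P -> A2 Sig X P -> A3 Sig X P -> A4 Sig X P ->
  A5 Sig X P -> A6 Sig X P -> A7 Sig X P ->
  forall (f : S -> V) (x y z : V),
    simple_act Sig X f -> X x -> X y -> X z ->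
    incomp P f (cst x) -> P f (cst y) -> P (cst z) f ->
    P (cst z) (cst x) /\ P (cst x) (cst y).
Proof.
move=> alg _ _ a1 _ _ _ _ a6 a7 f x y z Ff Xx Xy Xz fx fy zf; split.
  exact: (above_incomp_cst alg a1 a6 a7 Ff Xx Xz fx zf).
exact: (above_incomp_cst alg (A1_rev a1) (A6_rev a6) (A7_rev a7) Ff Xx Xy
  (incompC fx) fy).
Qed.
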